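(* Let $m\ge1$, let $k_1,k_2\ge0$ be integers and $r_1,r_2>0$ with $r_1^2+r_2^2=1$. Let $F_1:\mathbb{R}^{m+1}\to\mathbb{R}^{n_1+1}$ and $F_2:\mathbb{R}^{m+1}\to\mathbb{R}^{n_2+1}$ be forms of degrees $k_1$, $k_2$ with $|F_i(\bar x)|^2=r_i^2|\bar x|^{2k_i}$, restricting to $\varphi_1:\mathbb{S}^m\to\mathbb{S}^{n_1}(r_1)$ and $\varphi_2:\mathbb{S}^m\to\mathbb{S}^{n_2}(r_2)$, and let $\varphi=\iota\circ(\varphi_1,\varphi_2):\mathbb{S}^m\to\mathbb{S}^{n_1+n_2+1}$, where $\iota$ is the canonical inclusion of $\mathbb{S}^{n_1}(r_1)\times\mathbb{S}^{n_2}(r_2)$ into $\mathbb{S}^{n_1+n_2+1}$. If $\Delta^0F_1=0$ and $\Delta^0F_2=0$, then $\varphi$ is harmonic if and only if $k_1=k_2$.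
   Context: A form of degree $k$ is a map all of whose components are homogeneous polynomials of degree $k$. $\Delta^0=-\sum_i\partial^2/\partial(x^i)^2$ on $\mathbb{R}^{m+1}$, applied componentwise. $\mathbb{S}^n(r)$ is the sphere of radius $r$ centred at $0$, $\mathbb{S}^m=\mathbb{S}^m(1)$. Harmonic means vanishing tension field $\tau(\varphi)=\operatorname{trace}\nabla d\varphi$. *)

From HB Require Import structures.
From mathcomp Require Import all_boot all_order all_algebra.
From mathcomp Require Import all_classical all_reals all_analysis.
Set Implicit Arguments. Unset Strict Implicit. Unset Printing Implicit Defensive.
Import Order.TTheory GRing.Theory Num.Theory.
Import numFieldNormedType.Exports.
Local Open Scope ring_scope.

(* Euclidean inner product on row vectors (NB: the analysis norm on matrices
   is the sup norm, so we use the Euclidean dot product explicitly). *)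
Definition dotr {R : realType} {p : nat} (u v : 'rV[R]_p) : R :=
  \sum_(i < p) u 0 i * v 0 i.

Definition ebase {R : realType} {p : nat} (i : 'I_p) : 'rV[R]_p := delta_mx 0 i.

Definition homog_poly {R : realType} (m k : nat) (f : 'rV[R]_(m.+1) -> R) : Prop :=
  exists c : {ffun {ffun 'I_(m.+1) -> 'I_k.+1} -> R},
    forall x, f x = \sum_(a : {ffun 'I_(m.+1) -> 'I_k.+1}
                        | (\sum_(i < m.+1) (a i : nat) == k)%N)
                     c a * \prod_(i < m.+1) x 0 i ^+ a i.

Definition is_form {R : realType} (m n k : nat)
  (F : 'rV[R]_(m.+1) -> 'rV[R]_n) : Prop :=
  forall j : 'I_n, homog_poly k (fun x => F x 0 j).

Definition flat_laplacian_zero {R : realType} (m n : nat)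
  (F : 'rV[R]_(m.+1) -> 'rV[R]_n) : Prop :=
  forall (j : 'I_n) (x : 'rV[R]_(m.+1)),
    - (\sum_(i < m.+1)
         'D_(ebase i) ('D_(ebase i) (fun y => F y 0 j)) x) = 0.

Definition tproj {R : realType} {p : nat} (y v : 'rV[R]_p) : 'rV[R]_p :=
  v - dotr v y *: y.

Definition geod_second {R : realType} {m p : nat}
  (phi : 'rV[R]_(m.+1) -> 'rV[R]_p) (x e : 'rV[R]_(m.+1)) : 'rV[R]_p :=
  derive1 (derive1 (fun t : R => phi (cos t *: x + sin t *: e))) 0.

(* phi : S^m -> S^{p-1} (unit spheres) is harmonic: it maps the sphere into
   the sphere, and its tension field tau(phi) = trace nabla d phi vanishes.
   Along a geodesic gamma of S^m, (nabla d phi)(gamma',gamma') is the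
   tangential (to S^{p-1}) part of (phi o gamma)''; the trace is taken over
   an orthonormal frame e_1..e_m of T_x S^m (any such frame; the trace is
   frame independent). *)
Definition harmonic_sphere_map {R : realType} {m p : nat}
  (phi : 'rV[R]_(m.+1) -> 'rV[R]_p) : Prop :=
  (forall x, dotr x x = 1 -> dotr (phi x) (phi x) = 1) /\
  forall (x : 'rV[R]_(m.+1)) (e : 'I_m -> 'rV[R]_(m.+1)),
    dotr x x = 1 ->
    (forall a, dotr (e a) x = 0) ->
    (forall a b, dotr (e a) (e b) = (a == b)%:R) ->
    \sum_(a < m) tproj (phi x) (geod_second phi x (e a)) = 0.

(* Along the great circle γ(t) = cos t x + sin t e of S^m one has
   (f∘γ)''(0) = D²f(x)(e,e) - Df(x)x.  Summed over an orthonormal frame of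
   T_x S^m, the Hessian terms give the flat Laplacian minus D²f(x)(x,x), so by
   Euler's identities every component f of a form of degree k with Δ⁰f = 0
   satisfies Σ_a (f∘γ_a)''(0) = -λ_k f(x), where λ_k = k(k+m-1).  The tension
   field of φ = (F_1, F_2) at x is the part of (-λ_{k_1} F_1(x), -λ_{k_2} F_2(x))
   tangent to the sphere, namely
   (r_2²(λ_{k_2} - λ_{k_1}) F_1(x), r_1²(λ_{k_1} - λ_{k_2}) F_2(x)).
   It vanishes iff λ_{k_1} = λ_{k_2}, i.e. iff k_1 = k_2, since λ_k is strictly
   increasing in k when m >= 1. *)

From HB Require Import structures.
From mathcomp Require Import all_boot all_order all_algebra.
From mathcomp Require Import all_classical all_reals all_analysis.
From mathcomp Require Import ring zify.
Import Order.TTheory GRing.Theory Num.Theory.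
Import numFieldNormedType.Exports.
Local Open Scope ring_scope.
Set Implicit Arguments. Unset Strict Implicit.

Section PolynomialFunctions.
Variables (R : realType) (n : nat).
Implicit Types (f g : 'rV[R]_n -> R) (x v : 'rV[R]_n).

Inductive polyfun : ('rV[R]_n -> R) -> Prop :=
| polyfun_cst c : polyfun (cst c)
| polyfun_coord j : polyfun (fun x => x 0 j)
| polyfun_add f g : polyfun f -> polyfun g -> polyfun (f + g)
| polyfun_mul f g : polyfun f -> polyfun g -> polyfun (f * g).

Lemma polyfun_sum (I : Type) (r : seq I) (P : pred I) (F : I -> 'rV[R]_n -> R) :
  (forall a, polyfun (F a)) -> polyfun (fun x => \sum_(a <- r | P a) F a x).
Proof.
move=> hF; rewrite -fct_sumE.
by apply: big_ind => //; [exact: polyfun_cst 0 | exact: polyfun_add].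
Qed.

Lemma polyfun_prod (I : Type) (r : seq I) (P : pred I) (F : I -> 'rV[R]_n -> R) :
  (forall a, polyfun (F a)) -> polyfun (fun x => \prod_(a <- r | P a) F a x).
Proof.
move=> hF; rewrite -fct_prodE.
by apply: big_ind => //; [exact: polyfun_cst 1 | exact: polyfun_mul].
Qed.

Lemma polyfun_exp f k : polyfun f -> polyfun (fun x => f x ^+ k).
Proof.
move=> hf; rewrite -exprfctE; elim: k => [|k ih]; first exact: polyfun_cst 1.
by rewrite exprS; apply: polyfun_mul.
Qed.

Lemma polyfun_scale c f : polyfun f -> polyfun (fun x => c * f x).
Proof. exact: polyfun_mul (polyfun_cst c). Qed.

Lemma derive_coord j x v : 'D_v (fun y : 'rV[R]_n => y 0 j) x = v 0 j.
Proof.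
have := derive_mx (@derivable_id _ _ x v).
by rewrite derive_id => /(congr1 (fun M : 'rV[R]_n => M 0 j)); rewrite mxE.
Qed.

Lemma polyfun_derivable f : polyfun f -> forall x v, derivable f x v.
Proof.
elim=> [c|j|f1 f2 _ h1 _ h2|f1 f2 _ h1 _ h2] x v.
- exact: derivable_cst.
- exact: ((derivable_mxP _ _ _).1 (@derivable_id _ _ x v) 0 j).
- exact: derivableD.
- exact: derivableM.
Qed.

Lemma polyfun_derive f v : polyfun f -> polyfun ('D_v f).
Proof.
elim=> [c|j|f1 f2 p1 h1 p2 h2|f1 f2 p1 h1 p2 h2].
- rewrite (_ : 'D_v _ = cst 0); first exact: polyfun_cst.
  by apply/funext => x; rewrite derive_cst.
- rewrite (_ : 'D_v _ = cst (v 0 j)); first exact: polyfun_cst.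
  by apply/funext => x; rewrite derive_coord.
- rewrite (_ : 'D_v _ = 'D_v f1 + 'D_v f2); first exact: polyfun_add.
  by apply/funext => x; rewrite deriveD //; apply: polyfun_derivable.
- rewrite (_ : 'D_v _ = f1 * 'D_v f2 + f2 * 'D_v f1).
    by apply: polyfun_add; apply: polyfun_mul.
  by apply/funext => x; rewrite deriveM //; apply: polyfun_derivable.
Qed.

Lemma is_derive_comp_polyfun f (c : R -> 'rV[R]_n) (dc : 'I_n -> R) (t : R) :
  polyfun f -> (forall i, is_derive t 1 (fun s => c s 0 i) (dc i)) ->
  is_derive t 1 (f \o c) (\sum_i dc i * 'D_(ebase i) f (c t)).
Proof.
move=> pf hc; elim: pf => [a|j|f1 f2 p1 h1 p2 h2|f1 f2 p1 h1 p2 h2].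
- apply: (is_derive_eq (is_derive_cst a t 1)).
  by rewrite big1 // => i _; rewrite derive_cst mulr0.
- apply: (is_derive_eq (hc j)); rewrite (bigD1 j) //= big1 => [|i ij]; last first.
    by rewrite derive_coord mxE eq_sym (negbTE ij) mulr0.
  by rewrite derive_coord mxE !eqxx mulr1 addr0.
- apply: (is_derive_eq (is_deriveD h1 h2)).
  rewrite -big_split; apply: eq_bigr => i _.
  by rewrite deriveD ?mulrDr //; apply: polyfun_derivable.
- apply: (is_derive_eq (is_deriveM h1 h2)).
  rewrite /= /GRing.scale /= !big_distrr -big_split; apply: eq_bigr => i _.
  by rewrite deriveM ?mulrDr /GRing.scale /=; [ring | apply: polyfun_derivable..].
Qed.

End PolynomialFunctions.

Section RealDerivatives.
Variable R : realType.
Implicit Types (g h : R -> R) (a t : R).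

Lemma derive1_is_derive g t d : is_derive t 1 g d -> derive1 g t = d.
Proof. by move=> dg; rewrite derive1E derive_val. Qed.

Lemma is_derive_unique g t d1 d2 :
  is_derive t 1 g d1 -> is_derive t 1 g d2 -> d1 = d2.
Proof. by move=> /derive1_is_derive <- /derive1_is_derive. Qed.

Lemma is_derive_sumr n (G : 'I_n -> R -> R) (dG : 'I_n -> R) t :
  (forall i, is_derive t 1 (G i) (dG i)) ->
  is_derive t 1 (fun s => \sum_i G i s) (\sum_i dG i).
Proof. by move=> ?; rewrite -fct_sumE; apply: is_derive_sum. Qed.

Lemma is_derive_mulr g h t dg dh : is_derive t 1 g dg -> is_derive t 1 h dh ->
  is_derive t 1 (fun s => g s * h s) (g t * dh + h t * dg).
Proof. exact: is_deriveM. Qed.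

Lemma is_derive_scaler a g t d : is_derive t 1 g d ->
  is_derive t 1 (fun s => a * g s) (a * d).
Proof. exact: is_deriveZ. Qed.

Lemma is_derive_exprn_mulr k a t :
  is_derive t 1 (fun s => s ^+ k * a) (k%:R * t ^+ k.-1 * a).
Proof.
have := is_deriveM (is_deriveX k (@is_derive_id _ _ t 1)) (is_derive_cst a t 1).
rewrite exprfctE => /is_derive_eq; apply.
by rewrite /= /GRing.scale /=; ring.
Qed.

Lemma is_derive_cos_sin a b t :
  is_derive t 1 (fun s => cos s * a + sin s * b) (- sin t * a + cos t * b).
Proof.
apply: (is_derive_eq (is_deriveD (is_deriveM (is_derive_cos t) (is_derive_cst a t 1))
                                 (is_deriveM (is_derive_sin t) (is_derive_cst b t 1)))).
by rewrite /= /GRing.scale /=; ring.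
Qed.

Lemma derive1_row p (h : R -> 'rV[R]_p) (t : R) :
  (forall q, derivable (fun s => h s 0 q) t 1) ->
  derive1 h t = \row_q derive1 (fun s => h s 0 q) t.
Proof.
move=> dh; have dh' : derivable h t 1 by apply/derivable_mxP => i j; rewrite ord1.
rewrite derive1E (derive_mx dh'); apply/matrixP => i j.
by rewrite !mxE ord1 derive1E.
Qed.

End RealDerivatives.

Section HomogeneousPolynomials.
Variables (R : realType) (m k : nat).
Implicit Types (f : 'rV[R]_m.+1 -> R) (x : 'rV[R]_m.+1).

Lemma homog_polyfun f : homog_poly k f -> polyfun f.
Proof.
case=> c /funext ->; apply: polyfun_sum => a.
apply/polyfun_scale/polyfun_prod => i; exact/polyfun_exp/polyfun_coord.
Qed.

Lemma homog_polyZ f s x : homog_poly k f -> f (s *: x) = s ^+ k * f x.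
Proof.
case=> c hf; rewrite !hf big_distrr; apply: eq_bigr => a /eqP ha.
under eq_bigr do rewrite mxE exprMn.
by rewrite big_split /= prodrXr ha; ring.
Qed.

Lemma is_derive_scale_coord x (t : R) i :
  is_derive t 1 (fun s : R => (s *: x) 0 i) (x 0 i).
Proof.
under eq_fun do rewrite mxE.
by apply: (is_derive_eq (is_derive_exprn_mulr 1 _ _)); rewrite expr0 !mul1r.
Qed.

Lemma homog_euler f x s : homog_poly k f ->
  \sum_i x 0 i * 'D_(ebase i) f (s *: x) = k%:R * s ^+ k.-1 * f x.
Proof.
move=> hf; apply: (is_derive_unique (g := f \o (fun u => u *: x)) (t := s)).
  exact: is_derive_comp_polyfun (homog_polyfun hf) (is_derive_scale_coord x s).
rewrite (_ : f \o _ = fun u => u ^+ k * f x); first exact: is_derive_exprn_mulr.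
by apply/funext => u; rewrite /= homog_polyZ.
Qed.

Lemma homog_euler2 f x : homog_poly k f ->
  \sum_i x 0 i * \sum_j x 0 j * 'D_(ebase j) ('D_(ebase i) f) x =
  k%:R * k.-1%:R * f x.
Proof.
move=> hf; pose g s := \sum_i x 0 i * 'D_(ebase i) f (s *: x).
have dg : is_derive (1 : R) 1 g
    (\sum_i x 0 i * \sum_j x 0 j * 'D_(ebase j) ('D_(ebase i) f) x).
  apply: is_derive_sumr => i; apply: is_derive_scaler.
  have := is_derive_comp_polyfun (polyfun_derive (ebase i) (homog_polyfun hf))
    (is_derive_scale_coord x 1).
  by rewrite scale1r.
have dg' : is_derive (1 : R) 1 g (k.-1%:R * 1 ^+ k.-2 * (k%:R * f x)).
  rewrite (_ : g = fun s => s ^+ k.-1 * (k%:R * f x)); first exact: is_derive_exprn_mulr.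
  by apply/funext => s; rewrite /g homog_euler //; ring.
by rewrite (is_derive_unique dg dg') expr1n; ring.
Qed.

End HomogeneousPolynomials.

Section GreatCircles.
Variables (R : realType) (n : nat).
Implicit Types (f : 'rV[R]_n -> R) (x e : 'rV[R]_n).

Definition great_circle x e (t : R) : 'rV[R]_n := cos t *: x + sin t *: e.

Lemma great_circle0 x e : great_circle x e 0 = x.
Proof. by rewrite /great_circle cos0 sin0 scale1r scale0r addr0. Qed.

Lemma is_derive_great_circle f x e (t : R) : polyfun f ->
  is_derive t 1 (f \o great_circle x e)
    (\sum_i (- sin t * x 0 i + cos t * e 0 i) *
             'D_(ebase i) f (great_circle x e t)).
Proof.
move=> pf; apply: (is_derive_comp_polyfun pf) => i.
by rewrite /great_circle; under eq_fun do rewrite !mxE; apply: is_derive_cos_sin.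
Qed.

Lemma is_derive2_great_circle f x e : polyfun f ->
  is_derive (0 : R) 1 (derive1 (f \o great_circle x e))
    (\sum_i (e 0 i * \sum_j e 0 j * 'D_(ebase j) ('D_(ebase i) f) x
             - x 0 i * 'D_(ebase i) f x)).
Proof.
move=> pf; rewrite (_ : derive1 _ = fun t =>
  \sum_i (- sin t * x 0 i + cos t * e 0 i) * 'D_(ebase i) f (great_circle x e t));
  last first.
  by apply/funext => t; apply/derive1_is_derive/is_derive_great_circle.
apply: is_derive_sumr => i.
have dv : is_derive (0 : R) 1 (fun s : R => - sin s * x 0 i + cos s * e 0 i) (- x 0 i).
  rewrite (_ : (fun s => _) = fun s => cos s * e 0 i + sin s * (- x 0 i)).
    by apply: (is_derive_eq (is_derive_cos_sin _ _ _)); rewrite sin0 cos0; ring.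
  by apply/funext => s; ring.
have := is_derive_great_circle x e 0 (polyfun_derive (ebase i) pf).
move=> /(is_derive_mulr dv)/is_derive_eq; apply.
rewrite sin0 cos0 great_circle0; under eq_bigr do rewrite oppr0 mul0r add0r mul1r.
by rewrite /= great_circle0; ring.
Qed.

End GreatCircles.

Section GeodesicSecondDerivative.
Variables (R : realType) (m : nat).
Implicit Types (x e : 'rV[R]_m.+1).

Definition polymap p (F : 'rV[R]_m.+1 -> 'rV[R]_p) :=
  forall j, polyfun (fun x => F x 0 j).

Lemma form_polymap p k (F : 'rV[R]_m.+1 -> 'rV[R]_p) : is_form k F -> polymap F.
Proof. by move=> hF j; apply: homog_polyfun (hF j). Qed.

Lemma polymap_row_mx p1 p2 (F1 : 'rV[R]_m.+1 -> 'rV[R]_p1)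
    (F2 : 'rV[R]_m.+1 -> 'rV[R]_p2) :
  polymap F1 -> polymap F2 -> polymap (fun x => row_mx (F1 x) (F2 x)).
Proof.
move=> pF1 pF2 q; case: (split_ordP q) => j ->.
  by under eq_fun do rewrite row_mxEl.
by under eq_fun do rewrite row_mxEr.
Qed.

Lemma geod_second_row p (F : 'rV[R]_m.+1 -> 'rV[R]_p) x e : polymap F ->
  geod_second F x e =
  \row_q derive1 (derive1 ((fun y => F y 0 q) \o great_circle x e)) 0.
Proof.
move=> pF; rewrite /geod_second.
have -> : derive1 (fun t => F (cos t *: x + sin t *: e)) =
          fun t => \row_q derive1 ((fun y => F y 0 q) \o great_circle x e) t.
  apply/funext => t; apply: derive1_row => q.
  by have [] := is_derive_great_circle x e t (pF q).
rewrite derive1_row => [|q].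
  by apply/matrixP => i q; rewrite !mxE; under eq_fun do rewrite mxE.
under eq_fun do rewrite mxE.
by have [] := is_derive2_great_circle x e (pF q).
Qed.

Lemma geod_second_row_mx p1 p2 (F1 : 'rV[R]_m.+1 -> 'rV[R]_p1)
    (F2 : 'rV[R]_m.+1 -> 'rV[R]_p2) x e :
  polymap F1 -> polymap F2 ->
  geod_second (fun y => row_mx (F1 y) (F2 y)) x e =
  row_mx (geod_second F1 x e) (geod_second F2 x e).
Proof.
move=> pF1 pF2; have pF := polymap_row_mx pF1 pF2; rewrite !geod_second_row //.
apply/matrixP => i q; rewrite ord1; case: (split_ordP q) => j ->.
  by rewrite row_mxEl !mxE; under eq_fun do rewrite /= row_mxEl.
by rewrite row_mxEr !mxE; under eq_fun do rewrite /= row_mxEr.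
Qed.

End GeodesicSecondDerivative.

Section DotProduct.
Variables (R : realType) (p : nat).
Implicit Types (u v y : 'rV[R]_p).

Lemma dotrC u v : dotr u v = dotr v u.
Proof. by apply: eq_bigr => i _; rewrite mulrC. Qed.

Lemma dotr0l v : dotr 0 v = 0.
Proof. by rewrite /dotr big1 // => i _; rewrite mxE mul0r. Qed.

Lemma dotrZl a u v : dotr (a *: u) v = a * dotr u v.
Proof. by rewrite /dotr big_distrr; apply: eq_bigr => i _; rewrite mxE /= mulrA. Qed.

Lemma dotr_suml (I : Type) (r : seq I) (F : I -> 'rV[R]_p) v :
  dotr (\sum_(a <- r) F a) v = \sum_(a <- r) dotr (F a) v.
Proof.
by rewrite /dotr exchange_big; apply: eq_bigr => i _; rewrite summxE big_distrl.
Qed.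

Lemma dotr_ebase (i j : 'I_p) : dotr (ebase i : 'rV[R]_p) (ebase j) = (i == j)%:R.
Proof.
rewrite /dotr (bigD1 j) //= big1 => [|l lj]; last by rewrite !mxE (negbTE lj) andbF mulr0.
by rewrite !mxE !eqxx mulr1 addr0 eq_sym.
Qed.

Lemma tproj_sum (I : Type) (r : seq I) (F : I -> 'rV[R]_p) y :
  \sum_(a <- r) tproj y (F a) = tproj y (\sum_(a <- r) F a).
Proof. by rewrite /tproj sumrB dotr_suml scaler_suml. Qed.

Lemma orthonormal_basis_outer_sum (b : 'I_p -> 'rV[R]_p) :
  (forall a c, dotr (b a) (b c) = (a == c)%:R) ->
  forall i j, \sum_a b a 0 i * b a 0 j = (i == j)%:R.
Proof.
move=> b_on i j; pose Q : 'M[R]_p := \matrix_(a, l) b a 0 l.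
have QQt : Q *m Q^T = 1%:M.
  by apply/matrixP => a c; rewrite !mxE -b_on; apply: eq_bigr => l _; rewrite !mxE.
have /matrixP /(_ i j) := mulmx1C QQt; rewrite !mxE => <-.
by apply: eq_bigr => a _; rewrite !mxE.
Qed.

End DotProduct.

Lemma dotr_row_mx (R : realType) p1 p2 (u v : 'rV[R]_p1) (u' v' : 'rV[R]_p2) :
  dotr (row_mx u u') (row_mx v v') = dotr u v + dotr u' v'.
Proof.
by rewrite /dotr big_split_ord; congr (_ + _); apply: eq_bigr => i _;
  rewrite ?row_mxEl ?row_mxEr.
Qed.

Lemma sum_row_mx (R : realType) p1 p2 (I : Type) (r : seq I)
    (A : I -> 'rV[R]_p1) (B : I -> 'rV[R]_p2) :
  \sum_(a <- r) row_mx (A a) (B a) = row_mx (\sum_(a <- r) A a) (\sum_(a <- r) B a).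
Proof.
elim: r => [|a r ih]; first by rewrite !big_nil row_mx0.
by rewrite !big_cons ih add_row_mx.
Qed.

Section SphereFrames.
Variables (R : realType) (m : nat).

Lemma sphere_frame_outer_sum (x : 'rV[R]_m.+1) (e : 'I_m -> 'rV[R]_m.+1) :
  dotr x x = 1 -> (forall a, dotr (e a) x = 0) ->
  (forall a b, dotr (e a) (e b) = (a == b)%:R) ->
  forall i j, \sum_a e a 0 i * e a 0 j = (i == j)%:R - x 0 i * x 0 j.
Proof.
move=> x_unit e_perp e_on i j.
pose b r := if unlift ord0 r is Some a then e a else x.
have b_on r s : dotr (b r) (b s) = (r == s)%:R.
  rewrite /b; case: unliftP => [a ->|->]; case: unliftP => [c ->|->].
  - by rewrite e_on (inj_eq lift_inj).
  - by rewrite e_perp eq_sym (negbTE (neq_lift _ _)).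
  - by rewrite dotrC e_perp (negbTE (neq_lift _ _)).
  - by rewrite x_unit eqxx.
rewrite -(orthonormal_basis_outer_sum b_on) big_ord_recl /b unlift_none.
by under [in RHS]eq_bigr do rewrite liftK; ring.
Qed.

Lemma exists_sphere_frame : exists (x : 'rV[R]_m.+1) (e : 'I_m -> 'rV[R]_m.+1),
  [/\ dotr x x = 1, forall a, dotr (e a) x = 0 &
      forall a b, dotr (e a) (e b) = (a == b)%:R].
Proof.
exists (ebase ord0), (fun a => ebase (lift ord0 a)); split=> [|a|a b].
- by rewrite dotr_ebase eqxx.
- by rewrite dotr_ebase eq_sym (negbTE (neq_lift _ _)).
- by rewrite dotr_ebase (inj_eq lift_inj).
Qed.

End SphereFrames.

Definition sphere_eigenvalue (m k : nat) : nat := k * (k + m - 1).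

Lemma sphere_eigenvalueE m k : sphere_eigenvalue m k = (k * k.-1 + m * k)%N.
Proof.
case: k => [|k]; rewrite /sphere_eigenvalue ?mul0n ?muln0 //.
by rewrite addSn subn1 mulnDr [(m * _)%N]mulnC.
Qed.

Lemma sphere_eigenvalue_inj m : (1 <= m)%N -> injective (sphere_eigenvalue m).
Proof. by move=> m_gt0 k1 k2; rewrite !sphere_eigenvalueE; nia. Qed.

Section FrameTension.
Variables (R : realType) (m : nat) (x : 'rV[R]_m.+1) (e : 'I_m -> 'rV[R]_m.+1).
Hypotheses (x_unit : dotr x x = 1) (e_perp : forall a, dotr (e a) x = 0)
  (e_orthonormal : forall a b, dotr (e a) (e b) = (a == b)%:R).
Local Notation lambda k := (sphere_eigenvalue m k)%:R.

Lemma frame_quadratic_sum (H : 'I_m.+1 -> 'I_m.+1 -> R) :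
  \sum_a \sum_i e a 0 i * \sum_j e a 0 j * H i j =
  \sum_i H i i - \sum_i x 0 i * \sum_j x 0 j * H i j.
Proof.
transitivity (\sum_i \sum_j ((i == j)%:R - x 0 i * x 0 j) * H i j).
  rewrite exchange_big; apply: eq_bigr => i _.
  under eq_bigr do rewrite big_distrr; rewrite exchange_big /=.
  apply: eq_bigr => j _.
  rewrite -(sphere_frame_outer_sum x_unit e_perp e_orthonormal) big_distrl.
  by apply: eq_bigr => a _; rewrite mulrA.
rewrite -sumrB; apply: eq_bigr => i _; under eq_bigr do rewrite mulrBl.
rewrite sumrB big_distrr (bigD1 i) //= big1 => [|j ji]; last first.
  by rewrite eq_sym (negbTE ji) mul0r.
rewrite eqxx mul1r addr0; congr (_ - _).
by apply: eq_bigr => j _; rewrite /= mulrA.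
Qed.

Lemma sum_geod_second_harmonic k (f : 'rV[R]_m.+1 -> R) : homog_poly k f ->
  \sum_i 'D_(ebase i) ('D_(ebase i) f) x = 0 ->
  \sum_a derive1 (derive1 (f \o great_circle x (e a))) 0 =
  - lambda k * f x.
Proof.
move=> hf lap_f; have pf := homog_polyfun hf.
under eq_bigr do rewrite (derive1_is_derive (is_derive2_great_circle _ _ pf)) sumrB.
have grad : \sum_i x 0 i * 'D_(ebase i) f x = k%:R * f x.
  by have := homog_euler x 1 hf; rewrite scale1r expr1n mulr1.
rewrite sumrB frame_quadratic_sum lap_f (homog_euler2 x hf).
under eq_bigr do rewrite grad.
by rewrite sumr_const card_ord sphere_eigenvalueE natrD !natrM; ring.
Qed.

Lemma sum_geod_second_form n k (F : 'rV[R]_m.+1 -> 'rV[R]_n) :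
  is_form k F -> flat_laplacian_zero F ->
  \sum_a geod_second F x (e a) = - lambda k *: F x.
Proof.
move=> hF lap_F; have pF := form_polymap hF.
apply/matrixP => i j; rewrite ord1 summxE !mxE.
under eq_bigr do rewrite (geod_second_row _ _ pF) mxE.
rewrite (sum_geod_second_harmonic (hF j)) //.
by apply: oppr_inj; rewrite lap_F oppr0.
Qed.

Lemma tension_row_mx_forms n1 n2 k1 k2 (F1 : 'rV[R]_m.+1 -> 'rV[R]_n1)
    (F2 : 'rV[R]_m.+1 -> 'rV[R]_n2) :
  is_form k1 F1 -> is_form k2 F2 -> flat_laplacian_zero F1 -> flat_laplacian_zero F2 ->
  \sum_a tproj (row_mx (F1 x) (F2 x))
               (geod_second (fun y => row_mx (F1 y) (F2 y)) x (e a)) =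
  let mu := lambda k1 * dotr (F1 x) (F1 x) + lambda k2 * dotr (F2 x) (F2 x) in
  row_mx ((mu - lambda k1) *: F1 x) ((mu - lambda k2) *: F2 x).
Proof.
move=> hF1 hF2 lap_F1 lap_F2.
have [pF1 pF2] := (form_polymap hF1, form_polymap hF2).
rewrite tproj_sum; under eq_bigr do rewrite (geod_second_row_mx _ _ pF1 pF2).
rewrite sum_row_mx (sum_geod_second_form hF1) // (sum_geod_second_form hF2) //.
rewrite /tproj dotr_row_mx !dotrZl.
rewrite scale_row_mx opp_row_mx add_row_mx -!scalerBl.
by congr row_mx; congr (_ *: _); ring.
Qed.

Lemma tension_sphere_product n1 n2 k1 k2 (r1 r2 : R)
    (F1 : 'rV[R]_m.+1 -> 'rV[R]_n1) (F2 : 'rV[R]_m.+1 -> 'rV[R]_n2) :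
  r1 ^+ 2 + r2 ^+ 2 = 1 -> is_form k1 F1 -> is_form k2 F2 ->
  dotr (F1 x) (F1 x) = r1 ^+ 2 -> dotr (F2 x) (F2 x) = r2 ^+ 2 ->
  flat_laplacian_zero F1 -> flat_laplacian_zero F2 ->
  \sum_a tproj (row_mx (F1 x) (F2 x))
               (geod_second (fun y => row_mx (F1 y) (F2 y)) x (e a)) =
  row_mx ((r2 ^+ 2 * (lambda k2 - lambda k1)) *: F1 x)
         ((r1 ^+ 2 * (lambda k1 - lambda k2)) *: F2 x).
Proof.
move=> r12 hF1 hF2 F1_norm F2_norm lap_F1 lap_F2.
rewrite (tension_row_mx_forms hF1 hF2) //= F1_norm F2_norm.
have -> : r1 ^+ 2 = 1 - r2 ^+ 2 by rewrite -r12 addrK.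
by congr row_mx; congr (_ *: _); ring.
Qed.

End FrameTension.

Unset Implicit Arguments. Set Strict Implicit.
Theorem mainTheorem4 (R : realType) (m n1 n2 k1 k2 : nat) (r1 r2 : R)
  (F1 : 'rV[R]_(m.+1) -> 'rV[R]_(n1.+1))
  (F2 : 'rV[R]_(m.+1) -> 'rV[R]_(n2.+1)) :
  (1 <= m)%N -> 0 < r1 -> 0 < r2 -> r1 ^+ 2 + r2 ^+ 2 = 1 ->
  is_form k1 F1 -> is_form k2 F2 ->
  (forall x, dotr (F1 x) (F1 x) = r1 ^+ 2 * (dotr x x) ^+ k1) ->
  (forall x, dotr (F2 x) (F2 x) = r2 ^+ 2 * (dotr x x) ^+ k2) ->
  flat_laplacian_zero F1 -> flat_laplacian_zero F2 ->
  (harmonic_sphere_map (fun x => row_mx (F1 x) (F2 x)) <-> k1 = k2).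
Proof.
move=> m_gt0 r1_gt0 r2_gt0 r12 hF1 hF2 F1_norm F2_norm lap_F1 lap_F2.
have on_sphere x : dotr x x = 1 ->
    dotr (F1 x) (F1 x) = r1 ^+ 2 /\ dotr (F2 x) (F2 x) = r2 ^+ 2.
  by move=> x_unit; rewrite F1_norm F2_norm x_unit !expr1n !mulr1.
split=> [[_ harm] | k12].
  have [x [e [x_unit e_perp e_on]]] := exists_sphere_frame R m.
  have [F1x F2x] := on_sphere x x_unit.
  move: (tension_sphere_product x_unit e_perp e_on r12 hF1 hF2 F1x F2x lap_F1 lap_F2).
  rewrite harm // -row_mx0 => /esym/eq_row_mx[+ _] => /(congr1 (dotr^~ (F1 x))).
  rewrite dotrZl dotr0l F1x => /eqP.
  rewrite !mulf_eq0 (gt_eqF r1_gt0) (gt_eqF r2_gt0) /= orbF subr_eq0 eqr_nat.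
  by move=> /eqP/(sphere_eigenvalue_inj m_gt0)->.
split=> [x /on_sphere[F1x F2x] | x e x_unit e_perp e_on].
  by rewrite dotr_row_mx F1x F2x.
have [F1x F2x] := on_sphere x x_unit.
rewrite (tension_sphere_product x_unit e_perp e_on r12 hF1 hF2 F1x F2x) // k12.
by rewrite subrr !mulr0 !scale0r row_mx0.
Qed.
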